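(* Assume $f$ is differentiable on $\mathbb{R}^m$ with $L$-Lipschitz continuous gradient ($L>0$), and let $\bar q$ be the (unique) minimizer of $f^*$ on $\mathbb{R}^m$. Then for all $k\in\mathbb{N}$, $$\|q_k\|_2\le \sqrt{2L\,(f^*(0)-f^*(\bar q))}+\|\bar q\|_2=:R.$$
   Context: Let $\Omega\subseteq\mathbb{R}^d$ be a nonempty open set, $a_1,\dots,a_m\in\mathcal{C}_0(\Omega)$, and $A^*q=\sum_{i=1}^m q_ia_i$ for $q\in\mathbb{R}^m$. Let $f:\mathbb{R}^m\to\mathbb{R}$ be convex and bounded from below, with convex conjugate $f^*(q)=\sup_y\langle q,y\rangle-f(y)$ (under the assumption, $f^*$ is $\tfrac1L$-strongly convex). For $\Omega'\subseteq\Omega$, $(\mathcal{D}(\Omega'))$ is the problem $\sup\{-f^*(q):q\in\mathbb{R}^m,\ |A^*q(x)|\le1\ \forall x\in\Omega'\}$. The sets $\Omega_k\subseteq\Omega$ are those produced by the exchange algorithm (given $\Omega_0$; $q_k$ solves $(\mathcal{D}(\Omega_k))$; $X_k$ is the set of local maximizers $x\in\Omega$ of $|A^*q_k|$ with $|A^*q_k(x)|>1$; $\Omega_{k+1}=\Omega_k\cup X_k$); in particular $q_k$ is the solution of $(\mathcal{D}(\Omega_k))$. *)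

From Stdlib Require Import Reals Classical ClassicalEpsilon.
From mathcomp Require Import all_boot.
Set Implicit Arguments. Unset Strict Implicit. Unset Printing Implicit Defensive.
Open Scope R_scope.

Definition vec (n : nat) := 'I_n -> R.
Definition vzero (n : nat) : vec n := fun _ => 0.
Definition vadd (n : nat) (x y : vec n) : vec n := fun i => x i + y i.
Definition vsub (n : nat) (x y : vec n) : vec n := fun i => x i - y i.
Definition dot (n : nat) (x y : vec n) : R := \big[Rplus/0]_(i < n) (x i * y i).
Definition norm2 (n : nat) (x : vec n) : R := sqrt (dot x x).

Definition is_open (d : nat) (U : vec d -> Prop) : Prop :=
  forall x, U x -> exists r, 0 < r /\ forall y, norm2 (vsub y x) < r -> U y.
Definition is_closed (d : nat) (K : vec d -> Prop) : Prop :=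
  is_open (fun x => ~ K x).
Definition is_bounded (d : nat) (K : vec d -> Prop) : Prop :=
  exists M, forall x, K x -> norm2 x <= M.
(* Heine-Borel: compact = closed and bounded in R^d *)
Definition is_compact (d : nat) (K : vec d -> Prop) : Prop :=
  is_closed K /\ is_bounded K.

Definition continuous_on (d : nat) (Om : vec d -> Prop) (a : vec d -> R) : Prop :=
  forall x, Om x -> forall eps, 0 < eps -> exists delta, 0 < delta /\
    forall y, Om y -> norm2 (vsub y x) < delta -> Rabs (a y - a x) < eps.

(* C_0(Omega): continuous functions on Omega vanishing at the boundary of
   Omega and at infinity: for every eps > 0 there is a compact K contained in
   Omega with |a| < eps on Omega \ K. *)
Definition C0 (d : nat) (Om : vec d -> Prop) (a : vec d -> R) : Prop :=
  continuous_on Om a /\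
  forall eps, 0 < eps -> exists K : vec d -> Prop,
    is_compact K /\ (forall x, K x -> Om x) /\
    (forall x, Om x -> ~ K x -> Rabs (a x) < eps).

Definition Astar (d m : nat) (a : 'I_m -> vec d -> R) (q : vec m) (x : vec d) : R :=
  \big[Rplus/0]_(i < m) (q i * a i x).

Definition convex_fun (m : nat) (f : vec m -> R) : Prop :=
  forall x y t, 0 <= t <= 1 ->
    f (fun i => t * x i + (1 - t) * y i) <= t * f x + (1 - t) * f y.
Definition bounded_below (m : nat) (f : vec m -> R) : Prop :=
  exists c, forall y, c <= f y.

Definition has_gradient (m : nat) (f : vec m -> R) (x g : vec m) : Prop :=
  forall eps, 0 < eps -> exists delta, 0 < delta /\
    forall h, norm2 h < delta ->
      Rabs (f (vadd x h) - f x - dot g h) <= eps * norm2 h.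

Definition diff_Lipschitz_grad (m : nat) (f : vec m -> R) (L : R) : Prop :=
  exists g : vec m -> vec m,
    (forall x, has_gradient f x (g x)) /\
    (forall x y, norm2 (vsub (g x) (g y)) <= L * norm2 (vsub x y)).

(* extended reals R U {+oo} (enough for convex conjugates) *)
Inductive Rbar := Finite (r : R) | p_infty.
Definition Rbar_le (a b : Rbar) : Prop :=
  match a, b with
  | _, p_infty => True
  | p_infty, Finite _ => False
  | Finite x, Finite y => x <= y
  end.
(* real part; +oo is sent to 0 (only used on finite values) *)
Definition Rbar_real (a : Rbar) : R :=
  match a with Finite x => x | p_infty => 0 end.

(* convex conjugate f^*(q) = sup_y <q,y> - f(y) in R U {+oo} *)
Definition conj_set (m : nat) (f : vec m -> R) (q : vec m) : R -> Prop :=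
  fun r => exists y, r = dot q y - f y.

Lemma conj_set_inhabited (m : nat) (f : vec m -> R) (q : vec m) :
  exists r, conj_set f q r.
Proof. exists (dot q (@vzero m) - f (@vzero m)). exists (@vzero m). reflexivity. Qed.

Definition fstar (m : nat) (f : vec m -> R) (q : vec m) : Rbar :=
  match excluded_middle_informative (bound (conj_set f q)) with
  | left H => Finite (proj1_sig (completeness _ H (conj_set_inhabited f q)))
  | right _ => p_infty
  end.

(* the problem (D(Omega')) : sup { -f^*(q) : |A^* q(x)| <= 1 for all x in Omega' } *)
Definition feasible (d m : nat) (a : 'I_m -> vec d -> R) (Om' : vec d -> Prop)
  (q : vec m) : Prop :=
  forall x, Om' x -> Rabs (Astar a q x) <= 1.
Definition solves_D (d m : nat) (f : vec m -> R) (a : 'I_m -> vec d -> R)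
  (Om' : vec d -> Prop) (q : vec m) : Prop :=
  feasible a Om' q /\
  forall p, feasible a Om' p -> Rbar_le (fstar f q) (fstar f p).

Definition local_max_abs (d m : nat) (a : 'I_m -> vec d -> R) (Om : vec d -> Prop)
  (q : vec m) (x : vec d) : Prop :=
  Om x /\ exists r, 0 < r /\
    forall y, Om y -> norm2 (vsub y x) < r ->
      Rabs (Astar a q y) <= Rabs (Astar a q x).

Definition Xset (d m : nat) (a : 'I_m -> vec d -> R) (Om : vec d -> Prop)
  (q : vec m) : vec d -> Prop :=
  fun x => local_max_abs a Om q x /\ Rabs (Astar a q x) > 1.

Definition exchange_sequence (d m : nat) (f : vec m -> R) (a : 'I_m -> vec d -> R)
  (Om : vec d -> Prop) (Oms : nat -> vec d -> Prop) (qs : nat -> vec m) : Prop :=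
  (forall x, Oms O x -> Om x) /\
  (forall k, solves_D f a (Oms k) (qs k)) /\
  (forall k x, Oms (S k) x <-> (Oms k x \/ Xset a Om (qs k) x)).

Definition is_minimizer (m : nat) (f : vec m -> R) (qbar : vec m) : Prop :=
  forall q, Rbar_le (fstar f qbar) (fstar f q).

(* Let g = grad f, L-Lipschitz.  The proof rests on one inequality for the
   convex conjugate, the "quadratic growth" of f^* around gradient values:
       |q - g(x)|^2 <= 2L (f^*(q) - (<q,x> - f(x)))            (for all x, q),
   obtained from Fenchel-Young at the point y = x + (q - g(x))/L and the
   descent lemma  f(x+h) <= f(x) + <g(x),h> + L/2 |h|^2.  Together with
   f^*(g(x)) = <g(x),x> - f(x) (gradient inequality for convex f) this shows
   that the minimizer of f^* is qbar = g(0), with f^*(qbar) = -f(0), and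
       |q - qbar| <= sqrt (2L (f^*(q) - f^*(qbar))).
   Since q = 0 is feasible for every (D(Omega_k)), f^*(q_k) <= f^*(0), and the
   theorem follows from the triangle inequality |q_k| <= |q_k - qbar| + |qbar|. *)

From HB Require Import structures.
From Pilot Require Import Defs.
From Stdlib Require Import Reals Lra FunctionalExtensionality ClassicalEpsilon.
From mathcomp Require Import all_boot.
Set Implicit Arguments. Unset Strict Implicit.
Open Scope R_scope.

Lemma Rplus_associative : associative Rplus.
Proof. by move=> x y z; rewrite Rplus_assoc. Qed.
HB.instance Definition _ :=
  Monoid.isComLaw.Build R 0 Rplus Rplus_associative Rplus_comm Rplus_0_l.

Section FiniteSums.
Variable n : nat.
Implicit Types F G : 'I_n -> R.

Lemma sum_scal c F :
  \big[Rplus/0]_(i < n) (c * F i) = c * \big[Rplus/0]_(i < n) F i.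
Proof. by elim/big_rec2: _ => [|i x y _ ->]; ring. Qed.

Lemma sum_ge0 (P : pred 'I_n) F :
  (forall i, 0 <= F i) -> 0 <= \big[Rplus/0]_(i < n | P i) F i.
Proof.
by move=> HF; elim/big_ind: _ => // [|x y]; [lra | apply: Rplus_le_le_0_compat].
Qed.

End FiniteSums.

Section Euclidean.
Variable n : nat.
Implicit Types x y z : vec n.

Definition vscal (t : R) x : vec n := fun i => t * x i.

Lemma dot_sym x y : dot x y = dot y x.
Proof. by apply: eq_bigr => i _; rewrite Rmult_comm. Qed.

Lemma dot_addl x y z : dot (vadd x y) z = dot x z + dot y z.
Proof. by rewrite /dot -big_split; apply: eq_bigr => i _; apply: Rmult_plus_distr_r. Qed.

Lemma dot_scall t x z : dot (vscal t x) z = t * dot x z.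
Proof. by rewrite /dot -sum_scal; apply: eq_bigr => i _; rewrite /vscal; ring. Qed.

Lemma dot_subl x y z : dot (vsub x y) z = dot x z - dot y z.
Proof.
have -> : vsub x y = vadd x (vscal (-1) y).
  by apply: functional_extensionality => i; rewrite /vsub /vadd /vscal; ring.
by rewrite dot_addl dot_scall; ring.
Qed.

Lemma dot_addr x y z : dot z (vadd x y) = dot z x + dot z y.
Proof. by rewrite !(dot_sym z) dot_addl. Qed.

Lemma dot_subr x y z : dot z (vsub x y) = dot z x - dot z y.
Proof. by rewrite !(dot_sym z) dot_subl. Qed.

Lemma dot_scalr t x z : dot z (vscal t x) = t * dot z x.
Proof. by rewrite !(dot_sym z) dot_scall. Qed.

Lemma dot_zerol x : dot (@vzero n) x = 0.
Proof. by rewrite /dot big1 // => i _; rewrite /vzero Rmult_0_l. Qed.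

Lemma dot_zeror x : dot x (@vzero n) = 0.
Proof. by rewrite dot_sym dot_zerol. Qed.

Lemma dot_self_ge0 x : 0 <= dot x x.
Proof. by apply: sum_ge0 => i; apply: Rle_0_sqr. Qed.

Lemma dot_self_eq0 x : dot x x = 0 -> x = @vzero n.
Proof.
move=> H0; apply: functional_extensionality => i.
have Hi : x i * x i <= dot x x.
  rewrite /dot (bigD1 i) //= -{1}(Rplus_0_r (x i * x i)).
  by apply: Rplus_le_compat_l; apply: sum_ge0 => j; apply: Rle_0_sqr.
by rewrite /vzero; nra.
Qed.

Lemma norm2_sq x : norm2 x * norm2 x = dot x x.
Proof. exact/sqrt_sqrt/dot_self_ge0. Qed.

Lemma norm2_ge0 x : 0 <= norm2 x.
Proof. exact: sqrt_pos. Qed.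

Lemma norm2_scal t x : norm2 (vscal t x) = Rabs t * norm2 x.
Proof.
rewrite /norm2 dot_scall dot_scalr -Rmult_assoc sqrt_mult_alt; last exact: Rle_0_sqr.
by rewrite -sqrt_Rsqr_abs.
Qed.

Lemma quadratic_discriminant A B D :
  0 <= B -> (forall t, 0 <= A - 2 * t * D + t * t * B) -> D * D <= A * B.
Proof.
move=> HB Hq; case: (Rle_lt_or_eq_dec _ _ HB) => [Bpos | B0].
- have := Hq (D / B).
  have -> : A - 2 * (D / B) * D + D / B * (D / B) * B = (A * B - D * D) / B
    by field; lra.
  move=> H; have := Rmult_le_pos _ _ H HB.
  have -> : (A * B - D * D) / B * B = A * B - D * D by field; lra.
  lra.
- rewrite -B0 Rmult_0_r; case: (Req_dec D 0) => [-> | HD]; first lra.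
  have := Hq ((A + 1) / (2 * D)); rewrite -B0.
  have -> : A - 2 * ((A + 1) / (2 * D)) * D
            + (A + 1) / (2 * D) * ((A + 1) / (2 * D)) * 0 = -1 by field.
  lra.
Qed.

(* Cauchy-Schwarz, from the nonnegativity of |x - t y|^2 in t. *)
Lemma cauchy_schwarz x y : dot x y <= norm2 x * norm2 y.
Proof.
have Hdisc : dot x y * dot x y <= dot x x * dot y y.
  apply: quadratic_discriminant => [|t]; first exact: dot_self_ge0.
  have := dot_self_ge0 (vsub x (vscal t y)).
  by rewrite !dot_subl !dot_subr !dot_scall !dot_scalr (dot_sym y x); lra.
rewrite /norm2 -sqrt_mult_alt; last exact: dot_self_ge0.
apply: Rle_trans (Rle_abs _) _; rewrite -sqrt_Rsqr_abs.
exact: sqrt_le_1_alt.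
Qed.

Lemma norm2_triangle x z : norm2 x <= norm2 (vsub x z) + norm2 z.
Proof.
have E : dot x x = dot (vsub x z) (vsub x z) + 2 * dot (vsub x z) z + dot z z.
  by rewrite !dot_subl !dot_subr (dot_sym z x); ring.
rewrite -!norm2_sq in E.
have := cauchy_schwarz (vsub x z) z.
have := norm2_ge0 x; have := norm2_ge0 (vsub x z); have := norm2_ge0 z.
nra.
Qed.

End Euclidean.

Section Conjugate.
Variables (m : nat) (f : vec m -> R).

Lemma fenchel_young q r y : fstar f q = Defs.Finite r -> dot q y - f y <= r.
Proof.
rewrite /fstar; case: excluded_middle_informative => [Hb|] //.
case: completeness => r0 [Hub _] /= [<-]; apply: Hub; by exists y.
Qed.

Lemma fstar_finite q M :
  (forall y, dot q y - f y <= M) -> exists r, fstar f q = Defs.Finite r /\ r <= M.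
Proof.
move=> HM; rewrite /fstar; case: excluded_middle_informative => [Hb | Hnb].
- case: completeness => r [_ Hlub] /=; exists r; split => //.
  by apply: Hlub => _ [y ->].
- by exfalso; apply: Hnb; exists M => _ [y ->].
Qed.

End Conjugate.

Lemma Rbar_le_Finite a r :
  Rbar_le a (Defs.Finite r) -> exists s, a = Defs.Finite s /\ s <= r.
Proof. by case: a => [s|] //= Hs; exists s. Qed.

Lemma le_of_forall_eps A B N :
  0 <= N -> (forall eps, 0 < eps -> A - eps * N <= B) -> A <= B.
Proof.
move=> HN H; case: (Rle_dec A B) => // /Rnot_le_lt HAB; exfalso.
set e := (A - B) / (2 * (N + 1)).
have He : 0 < e by apply: Rdiv_lt_0_compat; lra.
have Ee : e * (2 * (N + 1)) = A - B by rewrite /e; field; lra.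
have := H e He; nra.
Qed.

Section Convexity.
Variables (m : nat) (f : vec m -> R).
Hypothesis f_convex : convex_fun f.

Lemma gradient_inequality x gx h :
  has_gradient f x gx -> f x + dot gx h <= f (vadd x h).
Proof.
move=> Hgrad; set N := norm2 h; have HN : 0 <= N by apply: norm2_ge0.
suff : dot gx h <= f (vadd x h) - f x by lra.
apply: (le_of_forall_eps HN) => eps Heps.
have [del [Hdel Htaylor]] := Hgrad eps Heps.
set t := Rmin 1 (del / (2 * (N + 1))).
have Ht0 : 0 < t by apply: Rmin_glb_lt; [lra | apply: Rdiv_lt_0_compat; lra].
have Ht1 : t <= 1 by apply: Rmin_l.
have HtN : t * N < del.
  have : t <= del / (2 * (N + 1)) by apply: Rmin_r.
  have : del / (2 * (N + 1)) * (2 * (N + 1)) = del by field; lra.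
  nra.
have := Htaylor (vscal t h).
rewrite norm2_scal Rabs_pos_eq -/N; last lra.
move=> /(_ HtN); rewrite -Rabs_Ropp => /(Rle_trans _ _ _ (Rle_abs _)) Hlow.
rewrite dot_scalr in Hlow.
have := f_convex (vadd x h) x (conj (Rlt_le _ _ Ht0) Ht1).
have -> : (fun i => t * vadd x h i + (1 - t) * x i) = vadd x (vscal t h).
  by apply: functional_extensionality => i; rewrite /vadd /vscal; ring.
move=> Hconv; apply: (Rmult_le_reg_l t) => //; nra.
Qed.

Lemma fstar_at_gradient x gx :
  has_gradient f x gx -> fstar f gx = Defs.Finite (dot gx x - f x).
Proof.
move=> Hgrad.
have [r [Er Hr]] : exists r, fstar f gx = Defs.Finite r /\ r <= dot gx x - f x.
  apply: fstar_finite => y.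
  have := gradient_inequality (vsub y x) Hgrad.
  have -> : vadd x (vsub y x) = y.
    by apply: functional_extensionality => i; rewrite /vadd /vsub; ring.
  by rewrite dot_subr; lra.
rewrite Er; congr Defs.Finite; apply: Rle_antisym => //.
exact: (fenchel_young x Er).
Qed.

End Convexity.

Definition line (m : nat) (x h : vec m) (s : R) : vec m := vadd x (vscal s h).

Lemma line_shift (m : nat) (x h : vec m) t u :
  vadd (line x h t) (vscal u h) = line x h (t + u).
Proof. by apply: functional_extensionality => i; rewrite /line /vadd /vscal; ring. Qed.

Lemma line_derivative (m : nat) (f : vec m -> R) x h t gt :
  has_gradient f (line x h t) gt ->
  derivable_pt_lim (fun s => f (line x h s)) t (dot gt h).
Proof.
move=> Hgrad eps Heps; set N := norm2 h; have HN : 0 <= N by apply: norm2_ge0.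
set c := eps / (2 * (N + 1)).
have Hc : 0 < c by apply: Rdiv_lt_0_compat; lra.
have Ec : c * (2 * (N + 1)) = eps by rewrite /c; field; lra.
have [del [Hdel Htaylor]] := Hgrad c Hc.
have Hd : 0 < del / (N + 1) by apply: Rdiv_lt_0_compat; lra.
exists (mkposreal _ Hd) => u Hu0 /= Hu.
have Hau : 0 < Rabs u by apply: Rabs_pos_lt.
have HuN : Rabs u * N < del.
  have : del / (N + 1) * (N + 1) = del by field; lra.
  nra.
have := Htaylor (vscal u h); rewrite norm2_scal -/N line_shift dot_scalr.
move=> /(_ HuN) Hclose.
have -> : (f (line x h (t + u)) - f (line x h t)) / u - dot gt h
          = (f (line x h (t + u)) - f (line x h t) - u * dot gt h) * / u
  by field.
rewrite Rabs_mult Rabs_inv.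
have Hinv : 0 < / Rabs u by apply: Rinv_0_lt_compat.
apply: (Rle_lt_trans _ (c * (Rabs u * N) * / Rabs u)).
  by apply: Rmult_le_compat_r; lra.
have -> : c * (Rabs u * N) * / Rabs u = c * N by field; lra.
nra.
Qed.

Lemma quadratic_derivative c K t :
  derivable_pt_lim (fun s => s * c + K * (s * s)) t (c + 2 * K * t).
Proof.
move=> eps Heps; have HK := Rabs_pos K.
set del := eps / (Rabs K + 1).
have Hdel : 0 < del by apply: Rdiv_lt_0_compat; lra.
have Edel : del * (Rabs K + 1) = eps by rewrite /del; field; lra.
exists (mkposreal _ Hdel) => u Hu0 /= Hu.
have -> : ((t + u) * c + K * ((t + u) * (t + u)) - (t * c + K * (t * t))) / u
          - (c + 2 * K * t) = K * u by field.
rewrite Rabs_mult; have := Rabs_pos u; nra.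
Qed.

Section Smoothness.
Variables (m : nat) (f : vec m -> R) (g : vec m -> vec m) (L : R).
Hypothesis f_grad : forall x, has_gradient f x (g x).
Hypothesis g_lipschitz : forall x y, norm2 (vsub (g x) (g y)) <= L * norm2 (vsub x y).
Hypothesis L_pos : 0 < L.

Lemma gradient_increment x h s :
  0 <= s -> dot (vsub (g (line x h s)) (g x)) h <= L * s * dot h h.
Proof.
move=> Hs; rewrite -norm2_sq.
have Hstep : vsub (line x h s) x = vscal s h.
  by apply: functional_extensionality => i; rewrite /line /vsub /vadd /vscal; ring.
have := g_lipschitz (line x h s) x; rewrite Hstep norm2_scal Rabs_pos_eq //.
have := cauchy_schwarz (vsub (g (line x h s)) (g x)) h.
have := norm2_ge0 h; nra.
Qed.

Lemma descent x h : f (vadd x h) <= f x + dot (g x) h + L / 2 * dot h h.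
Proof.
set c := dot (g x) h; set Q := dot h h.
pose phi s := f (line x h s) - (s * c + L / 2 * Q * (s * s)).
pose dphi s := dot (g (line x h s)) h - (c + 2 * (L / 2 * Q) * s).
have [s [Hmvt Hs]] : exists s, phi 1 - phi 0 = dphi s * (1 - 0) /\ 0 < s < 1.
  apply: MVT_cor2 => [|t _]; first lra.
  exact: derivable_pt_lim_minus (line_derivative (f_grad _))
                                (quadratic_derivative _ _ _).
have Hdphi : dphi s <= 0.
  have := gradient_increment x h (Rlt_le _ _ (proj1 Hs)).
  by rewrite /dphi dot_subl -/c -/Q; lra.
have Hline1 : line x h 1 = vadd x h.
  by apply: functional_extensionality => i; rewrite /line /vadd /vscal; ring.
have Hline0 : line x h 0 = x.
  by apply: functional_extensionality => i; rewrite /line /vadd /vscal; ring.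
move: Hmvt; rewrite /phi Hline1 Hline0; nra.
Qed.

(* Quadratic growth of f^*: the Fenchel-Young gap f^*(q) - (<q,x> - f(x)) is
   at least |q - g(x)|^2 / (2L); test Fenchel-Young at y = x + (q - g(x))/L
   and bound f(y) by the descent lemma.  This is the 1/L-strong convexity of
   f^* at the subgradient x of f^* at g(x). *)
Lemma fstar_growth x q r :
  fstar f q = Defs.Finite r ->
  dot (vsub q (g x)) (vsub q (g x)) <= 2 * L * (r - (dot q x - f x)).
Proof.
move=> Er; set h := vscal (/ L) (vsub q (g x)).
have <- : 2 * L * (dot q h - dot (g x) h - L / 2 * dot h h)
          = dot (vsub q (g x)) (vsub q (g x)).
  by rewrite -dot_subl /h dot_scall !dot_scalr; field; lra.
apply: Rmult_le_compat_l; first lra.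
have := fenchel_young (vadd x h) Er; rewrite dot_addr.
have := descent x h; lra.
Qed.

End Smoothness.

Section ConjugateMinimizer.
Variables (m : nat) (f : vec m -> R) (g : vec m -> vec m) (L : R).
Hypothesis f_convex : convex_fun f.
Hypothesis f_grad : forall x, has_gradient f x (g x).
Hypothesis g_lipschitz : forall x y, norm2 (vsub (g x) (g y)) <= L * norm2 (vsub x y).
Hypothesis L_pos : 0 < L.

Lemma minimizer_is_gradient_at_zero qbar :
  is_minimizer f qbar ->
  qbar = g (@vzero m) /\ fstar f qbar = Defs.Finite (- f (@vzero m)).
Proof.
move=> Hmin; set z := @vzero m.
have Ez : fstar f (g z) = Defs.Finite (- f z).
  by rewrite (fstar_at_gradient f_convex (f_grad z)) dot_zeror Rminus_0_l.
have := Hmin (g z); rewrite Ez => /Rbar_le_Finite [rb [Eb Hrb]].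
have := fstar_growth f_grad g_lipschitz L_pos z Eb.
rewrite dot_zeror Rminus_0_l => Hgrowth.
have /dot_self_eq0 Hdiff : dot (vsub qbar (g z)) (vsub qbar (g z)) = 0.
  by have := dot_self_ge0 (vsub qbar (g z)); nra.
have Eq : qbar = g z.
  apply: functional_extensionality => i.
  by have := congr1 (fun v => v i) Hdiff; rewrite /vsub /vzero /=; lra.
by split; last rewrite Eq.
Qed.

Lemma dist_to_minimizer qbar q r :
  is_minimizer f qbar -> fstar f q = Defs.Finite r ->
  norm2 (vsub q qbar) <= sqrt (2 * L * (r - Rbar_real (fstar f qbar))).
Proof.
move=> /minimizer_is_gradient_at_zero [-> ->] Er /=; apply: sqrt_le_1_alt.
by have := fstar_growth f_grad g_lipschitz L_pos (@vzero m) Er;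
  rewrite dot_zeror Rminus_0_l.
Qed.

End ConjugateMinimizer.

Lemma feasible_zero (d m : nat) (a : 'I_m -> vec d -> R) (Om' : vec d -> Prop) :
  feasible a Om' (@vzero m).
Proof.
move=> x _; rewrite /Astar big1 => [|i _]; last by rewrite /vzero Rmult_0_l.
by rewrite Rabs_R0; lra.
Qed.

Lemma iterate_fstar_bound (d m : nat) (f : vec m -> R) (a : 'I_m -> vec d -> R)
  (Om : vec d -> Prop) (Oms : nat -> vec d -> Prop) (qs : nat -> vec m) k :
  bounded_below f -> exchange_sequence f a Om Oms qs ->
  exists r, fstar f (qs k) = Defs.Finite r /\ r <= Rbar_real (fstar f (@vzero m)).
Proof.
move=> [c Hc] [_ [Hsol _]].
have [r0 [E0 _]] : exists r0, fstar f (@vzero m) = Defs.Finite r0 /\ r0 <= - c.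
  by apply: fstar_finite => y; rewrite dot_zerol; have := Hc y; lra.
have := (Hsol k).2 _ (@feasible_zero d m a (Oms k)); rewrite E0 /=.
exact: Rbar_le_Finite.
Qed.

Theorem mainTheorem2 (d m : nat) (Om : vec d -> Prop) (a : 'I_m -> vec d -> R)
  (f : vec m -> R) (L : R) (qbar : vec m)
  (Oms : nat -> vec d -> Prop) (qs : nat -> vec m) :
  (exists x, Om x) -> is_open Om ->
  (forall i, C0 Om (a i)) ->
  convex_fun f -> bounded_below f ->
  0 < L -> diff_Lipschitz_grad f L ->
  is_minimizer f qbar ->
  exchange_sequence f a Om Oms qs ->
  forall k : nat,
    norm2 (qs k) <=
      sqrt (2 * L * (Rbar_real (fstar f (@vzero m)) - Rbar_real (fstar f qbar)))
      + norm2 qbar.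
Proof.
move=> _ _ _ Hconv Hbelow HL [g [Hgrad Hlip]] Hmin Hexch k.
have [rk [Ek Hrk]] := iterate_fstar_bound k Hbelow Hexch.
apply: Rle_trans (norm2_triangle (qs k) qbar) _; apply: Rplus_le_compat_r.
apply: Rle_trans (dist_to_minimizer Hconv Hgrad Hlip HL Hmin Ek) _.
by apply: sqrt_le_1_alt; apply: Rmult_le_compat_l; lra.
Qed.
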